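(* Let $X$ be a set, let $\mathcal{L}$ be a nest on $X$, and let $Y\subseteq X$. Then $X={\downarrow}Y$ if and only if there exists a cover of $X$ by elements of $\mathcal{L}$ such that no single member of this cover contains $Y$.
   Context: A nest on $X$ is a family of subsets of $X$ totally ordered by inclusion. Define $x\triangleleft_{\mathcal{L}} y$ iff there exists $L\in\mathcal{L}$ with $x\in L$ and $y\notin L$. For $Y\subseteq X$, ${\downarrow}Y=\{x\in X : \exists y\in Y,\ x\triangleleft_{\mathcal{L}} y\}$. A cover of $X$ by elements of $\mathcal{L}$ is a subfamily of $\mathcal{L}$ whose union is $X$. *)

(* sets are predicates over a carrier type X (X itself is the whole type). *)
Set Implicit Arguments.

Definition subset {X : Type} (A B : X -> Prop) : Prop := forall x, A x -> B x.

Definition nest {X : Type} (L : (X -> Prop) -> Prop) : Prop :=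
  forall A B, L A -> L B -> subset A B \/ subset B A.

Definition tri {X : Type} (L : (X -> Prop) -> Prop) (x y : X) : Prop :=
  exists A, L A /\ A x /\ ~ A y.

Definition down {X : Type} (L : (X -> Prop) -> Prop) (Y : X -> Prop) : X -> Prop :=
  fun x => exists y, Y y /\ tri L x y.

Definition cover_by {X : Type} (L C : (X -> Prop) -> Prop) : Prop :=
  (forall A, C A -> L A) /\ (forall x, exists A, C A /\ A x).

(* A point x lies in ↓Y exactly when some member of L contains x but misses a
   point of Y, i.e. does not contain Y.  Hence ↓Y = X says precisely that the
   members of L not containing Y cover X, and any cover of X none of whose
   members contains Y consists of such members. *)
From Stdlib Require Import Classical.

Lemma not_subset_iff {X : Type} (Y A : X -> Prop) :
  ~ subset Y A <-> exists y, Y y /\ ~ A y.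
Proof.
  split.
  - intros HYA. apply NNPP. intros Hno. apply HYA. intros y Yy.
    apply NNPP. intros Ay. apply Hno. exists y. auto.
  - intros [y [Yy Ay]] HYA. exact (Ay (HYA y Yy)).
Qed.

Lemma down_iff {X : Type} (L : (X -> Prop) -> Prop) (Y : X -> Prop) (x : X) :
  down L Y x <-> exists A, L A /\ A x /\ ~ subset Y A.
Proof.
  split.
  - intros [y [Yy [A [LA [Ax Ay]]]]].
    exists A. split; [exact LA |]. split; [exact Ax |].
    apply not_subset_iff. exists y. auto.
  - intros [A [LA [Ax HYA]]].
    apply not_subset_iff in HYA. destruct HYA as [y [Yy Ay]].
    exists y. split; [exact Yy |]. exists A. auto.
Qed.

Theorem theorem4p1 (X : Type) (L : (X -> Prop) -> Prop) (Y : X -> Prop) :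
  nest L ->
  ((forall x : X, down L Y x) <->
   exists C : (X -> Prop) -> Prop, cover_by L C /\ forall A, C A -> ~ subset Y A).
Proof.
  intros _. split.
  - intros Hdown. exists (fun A => L A /\ ~ subset Y A).
    split; [split |].
    + intros A [LA _]. exact LA.
    + intros x. destruct (proj1 (down_iff L Y x) (Hdown x)) as [A [LA [Ax HYA]]].
      exists A. auto.
    + intros A [_ HYA]. exact HYA.
  - intros [C [[HCL Hcov] HCY]] x.
    destruct (Hcov x) as [A [CA Ax]].
    apply down_iff. exists A. auto.
Qed.
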